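(* Let $K\in\mathcal{K}$, let $K'=R^{-1}B^\top P_K$, and let $\Psi_K=(K-K')^\top R(K-K')$. If $\Psi_K=0$, then $K=K^\star$.
   Context: Let $A\in\mathbb{R}^{n\times n}$, $B\in\mathbb{R}^{n\times m}$, $C\in\mathbb{R}^{p\times n}$, $D\in\mathbb{R}^{n\times q}$, $E\in\mathbb{R}^{p\times m}$, $\gamma>0$, with $Q:=C^\top C\succ 0$, $E^\top C=0$, $R:=E^\top E\succ 0$. For $K\in\mathbb{R}^{m\times n}$ set $A_K=A-BK$, $Q_K=Q+K^\top RK$, $T_{zw}(K)(s)=(C-EK)(sI-A+BK)^{-1}D$, and $\mathcal{K}=\{K:\ A_K\text{ Hurwitz},\ \|T_{zw}(K)\|_{\mathcal{H}_\infty}<\gamma\}$, where $\|G\|_{\mathcal{H}_\infty}=\sup_{\omega\in\mathbb{R}}\bar\sigma(G(j\omega))$. For $K\in\mathcal{K}$, $P_K$ denotes the unique symmetric positive definite solution of $A_K^\top P+PA_K+Q_K+\gamma^{-2}PDD^\top P=0$ for which $A_K+\gamma^{-2}DD^\top P_K$ is Hurwitz. $P^\star$ denotes the unique symmetric positive definite (stabilizing) solution of $A^\top P+PA-P(BR^{-1}B^\top-\gamma^{-2}DD^\top)P+Q=0$, and $K^\star=R^{-1}B^\top P^\star$. *)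

From HB Require Import structures.
From mathcomp Require Import all_boot all_order all_algebra.
From mathcomp Require Import all_classical all_reals.
From mathcomp Require Import ereal complex.
Set Implicit Arguments. Unset Strict Implicit. Unset Printing Implicit Defensive.
Import Order.TTheory GRing.Theory Num.Theory.
Local Open Scope ring_scope.
Local Open Scope classical_set_scope.

Section Defs.
Variable R : realType.

Definition cmx (m n : nat) (M : 'M[R]_(m, n)) : 'M[R[i]]_(m, n) :=
  map_mx (fun x => (x%:C)%C) M.

Definition hurwitz (n : nat) (A : 'M[R]_n) : Prop :=
  forall (lam : R[i]) (v : 'cV[R[i]]_n),
    v != 0 -> cmx A *m v = lam *: v -> complex.Re lam < 0.

Definition sym_mx (n : nat) (P : 'M[R]_n) : Prop := P^T = P.
Definition posdef (n : nat) (P : 'M[R]_n) : Prop :=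
  sym_mx P /\ forall x : 'cV[R]_n, x != 0 -> 0 < (x^T *m P *m x) 0 0.

Definition cvnorm (n : nat) (v : 'cV[R[i]]_n) : R :=
  Num.sqrt (\sum_i ((complex.Re (v i 0)) ^+ 2 + (complex.Im (v i 0)) ^+ 2)).

Definition sigma_max (p q : nat) (M : 'M[R[i]]_(p, q)) : R :=
  sup [set cvnorm (M *m x) | x in [set x : 'cV[R[i]]_q | cvnorm x = 1]].

(* H-infinity norm (extended-real valued, +oo if unbounded) of a transfer
   function given by its values on the imaginary axis *)
Definition hinf_norm (p q : nat) (G : R -> 'M[R[i]]_(p, q)) : \bar R :=
  ereal_sup [set (sigma_max (G w))%:E | w in [set: R]].

Definition Tzw (n m p q : nat) (A : 'M[R]_n) (B : 'M[R]_(n, m))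
  (C : 'M[R]_(p, n)) (D : 'M[R]_(n, q)) (E : 'M[R]_(p, m))
  (K : 'M[R]_(m, n)) (w : R) : 'M[R[i]]_(p, q) :=
  cmx (C - E *m K) *m invmx ((('i%C * (w%:C)%C) %:M) - cmx (A - B *m K)) *m cmx D.

Definition admissible (n m p q : nat) (A : 'M[R]_n) (B : 'M[R]_(n, m))
  (C : 'M[R]_(p, n)) (D : 'M[R]_(n, q)) (E : 'M[R]_(p, m)) (gamma : R)
  (K : 'M[R]_(m, n)) : Prop :=
  hurwitz (A - B *m K) /\ (hinf_norm (Tzw A B C D E K) < gamma%:E)%E.

Definition is_PK (n m p q : nat) (A : 'M[R]_n) (B : 'M[R]_(n, m))
  (C : 'M[R]_(p, n)) (D : 'M[R]_(n, q)) (E : 'M[R]_(p, m)) (gamma : R)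
  (K : 'M[R]_(m, n)) (P : 'M[R]_n) : Prop :=
  let AK := A - B *m K in
  let QK := C^T *m C + K^T *m (E^T *m E) *m K in
  posdef P /\
  AK^T *m P + P *m AK + QK + gamma ^-2 *: (P *m D *m D^T *m P) = 0 /\
  hurwitz (AK + gamma ^-2 *: (D *m D^T *m P)).

Definition is_Pstar (n m p q : nat) (A : 'M[R]_n) (B : 'M[R]_(n, m))
  (C : 'M[R]_(p, n)) (D : 'M[R]_(n, q)) (E : 'M[R]_(p, m)) (gamma : R)
  (P : 'M[R]_n) : Prop :=
  let S := B *m invmx (E^T *m E) *m B^T - gamma ^-2 *: (D *m D^T) in
  posdef P /\
  A^T *m P + P *m A - P *m S *m P + C^T *m C = 0 /\
  hurwitz (A - S *m P).

End Defs.

From HB Require Import structures.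
From mathcomp Require Import all_boot all_order all_algebra.
From mathcomp Require Import all_classical all_reals.
From mathcomp Require Import ereal complex.
Import Order.TTheory GRing.Theory Num.Theory.
Set Implicit Arguments. Unset Strict Implicit. Unset Printing Implicit Defensive.
Local Open Scope ring_scope.

(* Since R is positive definite, Psi_K = 0 forces K = K' = R^-1 B^T P_K.  For
   this gain the Riccati equation defining P_K becomes the game Riccati
   equation defining P*, and the stability condition on P_K says that P_K is
   a stabilizing solution of it.  Two stabilizing solutions P1, P2 of the same
   Riccati equation coincide: their difference X solves the Sylvester equation
   (A - S P1)^T X + X (A - S P2) = 0 whose coefficients are Hurwitz, hence
   have disjoint spectra after a sign change, and such an equation only has
   the trivial solution (Cayley-Hamilton).  So P_K = P* and K = K*. *)

Lemma char_poly_trmx (F : comNzRingType) (k : nat) (M : 'M[F]_k) :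
  char_poly M^T = char_poly M.
Proof.
rewrite /char_poly -det_tr /char_poly_mx; congr (\det _).
by rewrite linearB /= tr_scalar_mx map_trmx trmxK.
Qed.

Lemma eigenvalue_trmx (F : fieldType) (k : nat) (M : 'M[F]_k) (z : F) :
  eigenvalue M^T z = eigenvalue M z.
Proof. by rewrite !eigenvalue_root_char char_poly_trmx. Qed.

Lemma eigenvalueN (F : fieldType) (k : nat) (M : 'M[F]_k) (z : F) :
  eigenvalue (- M) z = eigenvalue M (- z).
Proof.
apply/eigenvalueP/eigenvalueP => -[v ev v0]; exists v => //.
  by rewrite scaleNr -ev mulmxN opprK.
by rewrite mulmxN ev scaleNr opprK.
Qed.

Lemma unitmx_sub_scalar (F : fieldType) (k : nat) (M : 'M[F]_k) (z : F) :
  ~~ eigenvalue M z -> M - z%:M \in unitmx.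
Proof.
move=> Mz; rewrite unitmxE unitfE; apply: contra Mz => /det0P [v v0 ev].
by apply/eigenvalueP; exists v => //; apply/eqP; rewrite -subr_eq0 -mul_mx_scalar -mulmxBr ev.
Qed.

Lemma horner_mx_intertwine (F : comNzRingType) (k l : nat) (p : {poly F})
    (a : 'M[F]_k.+1) (b : 'M[F]_l.+1) (Y : 'M[F]_(k.+1, l.+1)) :
  a *m Y = Y *m b -> horner_mx a p *m Y = Y *m horner_mx b p.
Proof.
move=> aYb; elim/poly_ind: p => [|p c IHp]; first by rewrite !rmorph0 mul0mx mulmx0.
rewrite !(rmorphD, rmorphM) /= !(horner_mx_X, horner_mx_C) -!mulmxE.
by rewrite mulmxDl mulmxDr -mulmxA aYb !mulmxA IHp mul_scalar_mx mul_mx_scalar.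
Qed.

Lemma sylvester_eq0 (F : closedFieldType) (k l : nat)
    (a : 'M[F]_k.+1) (b : 'M[F]_l.+1) (Y : 'M[F]_(k.+1, l.+1)) :
  (forall z, eigenvalue a z -> ~~ eigenvalue b z) -> a *m Y = Y *m b -> Y = 0.
Proof.
move=> ab_disjoint aYb.
have [s char_a] := closed_field_poly_normal (char_poly a).
rewrite (monicP (char_poly_monic _)) scale1r in char_a.
have unit_b : horner_mx b (char_poly a) \in unitmx.
  rewrite char_a rmorph_prod big_seq; apply: (big_ind (fun M => M \in unitmx)).
  - exact: unitmx1.
  - by move=> M N uM uN; rewrite -mulmxE unitmx_mul uM uN.
  move=> z s_z; rewrite rmorphB /= horner_mx_X horner_mx_C.
  apply/unitmx_sub_scalar/ab_disjoint.
  by rewrite eigenvalue_root_char char_a root_prod_XsubC.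
have : Y *m horner_mx b (char_poly a) = 0.
  by rewrite -(horner_mx_intertwine (char_poly a) aYb) Cayley_Hamilton mul0mx.
by move/(congr1 (mulmx^~ (invmx (horner_mx b (char_poly a))))); rewrite mulmxK // mul0mx.
Qed.

(* With S = B R^-1 B^T - gamma^-2 D D^T this is the left-hand side of the
   Riccati equation in [is_Pstar]. *)
Definition riccati (F : comNzRingType) (n : nat) (A S Q P : 'M[F]_n) : 'M[F]_n :=
  A^T *m P + P *m A - P *m S *m P + Q.

Lemma riccati_sub (F : comNzRingType) (n : nat) (A S Q P1 P2 : 'M[F]_n) :
  S^T = S -> P1^T = P1 ->
  riccati A S Q P1 - riccati A S Q P2 =
  (A - S *m P1)^T *m (P1 - P2) + (P1 - P2) *m (A - S *m P2).
Proof.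
move=> S_sym P1_sym.
have telescope : P1 *m S *m (P1 - P2) + (P1 - P2) *m S *m P2 =
                 P1 *m S *m P1 - P2 *m S *m P2.
  by rewrite mulmxBr !mulmxBl addrA subrK.
rewrite [(A - _)^T]linearB /= trmx_mul S_sym P1_sym.
rewrite (mulmxBl A^T) (mulmxBr (P1 - P2) A) mulmxA.
rewrite addrACA -opprD telescope mulmxBr mulmxBl.
rewrite /riccati opprD addrACA subrr addr0 -addrACA -opprD [in RHS]opprB.
by rewrite [in LHS]opprD opprK addrACA (addrC (- _)).
Qed.

Section RealMatrices.
Variable R : realType.

Lemma hurwitz_eigenvalue (k : nat) (M : 'M[R]_k) (z : R[i]) :
  hurwitz M -> eigenvalue (cmx M) z -> complex.Re z < 0.
Proof.
rewrite -eigenvalue_trmx => hM /eigenvalueP [v ev v0].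
apply: (hM z v^T); first by rewrite trmx_eq0.
by rewrite -[cmx M]trmxK -trmx_mul ev linearZ.
Qed.

Lemma hurwitz_sylvester_eq0 (k : nat) (M1 M2 X : 'M[R]_k) :
  hurwitz M1 -> hurwitz M2 -> M1^T *m X + X *m M2 = 0 -> X = 0.
Proof.
case: k M1 M2 X => [|k] M1 M2 X h1 h2 eq; first by apply/matrixP => [[]].
apply: (@map_mx_inj _ _ (real_complex R)); rewrite map_mx0.
apply: (@sylvester_eq0 _ _ _ (cmx M1)^T (- cmx M2)).
  move=> z; rewrite eigenvalue_trmx eigenvalueN => /(hurwitz_eigenvalue h1) Rez.
  apply/negP => /(hurwitz_eigenvalue h2); rewrite raddfN /= oppr_lt0.
  by move/(lt_trans Rez); rewrite ltxx.
apply/eqP; rewrite /cmx mulmxN -addr_eq0 map_trmx.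
by rewrite -!map_mxM -map_mxD eq map_mx0.
Qed.

Lemma posdef_unitmx (k : nat) (M : 'M[R]_k) : posdef M -> M \in unitmx.
Proof.
move=> [M_sym M_pos]; rewrite -unitmx_tr unitmxE unitfE.
apply/negP => /det0P [v v0 vM0].
have := M_pos v^T; rewrite trmx_eq0 v0 trmxK -M_sym vM0 mul0mx mxE.
by rewrite ltxx => /(_ isT).
Qed.

Lemma posdef_quad_eq0 (k l : nat) (M : 'M[R]_k) (X : 'M[R]_(k, l)) :
  posdef M -> X^T *m M *m X = 0 -> X = 0.
Proof.
move=> [_ M_pos] XMX0; apply/trmx_inj/row_matrixP => j.
rewrite trmx0 row0 -tr_col colE; apply/eqP; rewrite trmx_eq0; apply: contraT => /M_pos.
by rewrite trmx_mul !mulmxA -(mulmxA _ X^T) -(mulmxA _ (X^T *m M)) XMX0 mulmx0 mul0mx mxE ltxx.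
Qed.

Lemma riccati_stabilizing_unique (k : nat) (A S Q P1 P2 : 'M[R]_k) :
  S^T = S -> P1^T = P1 -> riccati A S Q P1 = 0 -> riccati A S Q P2 = 0 ->
  hurwitz (A - S *m P1) -> hurwitz (A - S *m P2) -> P1 = P2.
Proof.
move=> S_sym P1_sym are1 are2 stab1 stab2; apply/eqP; rewrite -subr_eq0; apply/eqP.
by apply: (hurwitz_sylvester_eq0 stab1 stab2); rewrite -(riccati_sub A Q P2) // are1 are2 subrr.
Qed.

End RealMatrices.

Section FeedbackGain.
Variables (F : fieldType) (n m : nat).
Variables (A : 'M[F]_n) (B : 'M[F]_(n, m)) (Rm : 'M[F]_m) (P : 'M[F]_n).
Hypotheses (Rm_sym : Rm^T = Rm) (Rm_unit : Rm \in unitmx) (P_sym : P^T = P).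

Let G := B *m invmx Rm *m B^T.
Let K := invmx Rm *m B^T *m P.

Lemma gain_sym : G^T = G.
Proof. by rewrite /G !trmx_mul trmxK trmx_inv Rm_sym mulmxA. Qed.

Lemma closed_loop_gain (W : 'M[F]_n) (c : F) :
  A - B *m K + c *: (W *m P) = A - (G - c *: W) *m P.
Proof.
by rewrite /K /G mulmxBl -scalemxAl opprB addrA !mulmxA addrAC.
Qed.

Lemma riccati_gain (Q W : 'M[F]_n) (c : F) :
  (A - B *m K)^T *m P + P *m (A - B *m K) + (Q + K^T *m Rm *m K)
    + c *: (P *m W *m P) = riccati A (G - c *: W) Q P.
Proof.
have BK : B *m K = G *m P by rewrite /K /G !mulmxA.
have KRK : K^T *m Rm *m K = P *m G *m P.
  rewrite /K /G !trmx_mul trmxK P_sym trmx_inv Rm_sym !mulmxA.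
  by rewrite -(mulmxA _ (invmx Rm) Rm) mulVmx // mulmx1.
rewrite BK KRK [(A - _)^T]linearB /= trmx_mul gain_sym P_sym mulmxBl mulmxBr !mulmxA.
rewrite /riccati mulmxBr mulmxBl -scalemxAr -scalemxAl !mulmxA.
set g := P *m B *m _ *m B^T *m P; set w := c *: _.
rewrite addrACA subrK opprB addrA (addrAC _ Q) (addrAC _ Q w).
by rewrite (addrAC (A^T *m P) (- g)) (addrAC _ (- g) w).
Qed.
End FeedbackGain.

Theorem lemma4 (R : realType) (n m p q : nat)
  (A : 'M[R]_n) (B : 'M[R]_(n, m)) (C : 'M[R]_(p, n)) (D : 'M[R]_(n, q))
  (E : 'M[R]_(p, m)) (gamma : R)
  (K : 'M[R]_(m, n)) (PK Pstar : 'M[R]_n) :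
  0 < gamma ->
  posdef (C^T *m C) ->
  E^T *m C = 0 ->
  posdef (E^T *m E) ->
  admissible A B C D E gamma K ->
  is_PK A B C D E gamma K PK ->
  is_Pstar A B C D E gamma Pstar ->
  let Kp := invmx (E^T *m E) *m B^T *m PK in
  (K - Kp)^T *m (E^T *m E) *m (K - Kp) = 0 ->
  K = invmx (E^T *m E) *m B^T *m Pstar.
Proof.
move=> _ _ _ Rpd _ [[PK_sym _] [PK_eq PK_stab]] [_ [Pstar_are Pstar_stab]] Kp.
rewrite {}/Kp => Psi0.
have K_gain : K = invmx (E^T *m E) *m B^T *m PK.
  by apply/eqP; rewrite -subr_eq0; apply/eqP/(posdef_quad_eq0 Rpd).
have Rm_unit := posdef_unitmx Rpd.
rewrite K_gain; congr (_ *m _).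
apply: (riccati_stabilizing_unique _ PK_sym _ Pstar_are _ Pstar_stab).
- by rewrite linearB /= linearZ /= gain_sym ?Rpd.1 // trmx_mul trmxK.
- rewrite -(riccati_gain A B Rpd.1 Rm_unit PK_sym (C^T *m C) (D *m D^T) (gamma ^-2)).
  by rewrite (mulmxA PK D) -K_gain.
- by rewrite -closed_loop_gain -K_gain.
Qed.
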